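(* Let $K\subseteq\mathbb{R}^n$ be a convex polytope. (a) If $K$ has $m+1$ vertices, then $\Gamma_l(K)\leq\Gamma_l(K_m^{1*})$ for all $l\in\mathbb{Z}^+$. (b) If $K$ is centrally symmetric and has $2m$ vertices, then $\Gamma_l(K)\leq\Gamma_l(K_m^{1})$ for all $l\in\mathbb{Z}^+$.
   Context: For a compact convex set $K\subseteq\mathbb{R}^d$ and $l\in\mathbb{Z}^+$, the covering functional is $\Gamma_l(K)=\inf\{\gamma>0:\exists C\subseteq\mathbb{R}^d,\ |C|=l,\ K\subseteq C+\gamma K\}$. $K_m^1=\{(x_1,\dots,x_m)\in\mathbb{R}^m:\sum_{i=1}^m|x_i|\leq1\}$ and $K_m^{1*}=\{(x_1,\dots,x_m)\in\mathbb{R}^m:\sum_{i=1}^m x_i\leq1,\ x_i\geq0\ \forall i\}$. *)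

From HB Require Import structures.
From mathcomp Require Import all_boot all_order all_algebra.
From mathcomp Require Import all_classical all_reals all_analysis.
Set Implicit Arguments. Unset Strict Implicit. Unset Printing Implicit Defensive.
Import Order.TTheory GRing.Theory Num.Theory.
Local Open Scope classical_set_scope.
Local Open Scope ring_scope.

Definition hull (R : realType) (d : nat) (P : seq 'rV[R]_d) : set 'rV[R]_d :=
  [set x | exists lam : 'I_(size P) -> R,
     (forall i, 0 <= lam i) /\ \sum_i lam i = 1 /\
     x = \sum_i lam i *: P`_i].

Definition polytope (R : realType) (d : nat) (K : set 'rV[R]_d) : Prop :=
  exists P : seq 'rV[R]_d, K = hull P.

Definition extreme_point (R : realType) (d : nat) (K : set 'rV[R]_d)
  (x : 'rV[R]_d) : Prop :=
  K x /\ forall y z t, K y -> K z -> 0 < t < 1 ->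
    x = (1 - t) *: y + t *: z -> y = x /\ z = x.

Definition num_vertices (R : realType) (d : nat) (K : set 'rV[R]_d) (k : nat)
  : Prop :=
  exists s : seq 'rV[R]_d, uniq s /\ size s = k /\
    forall x, extreme_point K x <-> x \in s.

Definition centrally_symmetric (R : realType) (d : nat) (K : set 'rV[R]_d)
  : Prop :=
  exists c : 'rV[R]_d, forall x, K x <-> K (2 *: c - x).

Definition translates (R : realType) (d l : nat) (C : 'I_l -> 'rV[R]_d)
  (g : R) (K : set 'rV[R]_d) : set 'rV[R]_d :=
  [set z | exists i y, K y /\ z = C i + g *: y].

(* Covering functional Gamma_l(K), as an extended real (inf of empty = +oo). *)
Definition Gamma (R : realType) (d l : nat) (K : set 'rV[R]_d) : \bar R :=
  ereal_inf [set (g%:E)%E | g in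
    [set g : R | 0 < g /\ exists C : 'I_l -> 'rV[R]_d, K `<=` translates C g K]].

Definition K1star (R : realType) (m : nat) : set 'rV[R]_m :=
  [set x | \sum_i x ord0 i <= 1 /\ forall i, 0 <= x ord0 i].

Definition K1 (R : realType) (m : nat) : set 'rV[R]_m :=
  [set x | \sum_i `|x ord0 i| <= 1].

From HB Require Import structures.
From mathcomp Require Import all_boot all_order all_algebra.
From mathcomp Require Import all_classical all_reals all_analysis.
From mathcomp Require Import ring lra.
Import Order.TTheory GRing.Theory Num.Theory.
Local Open Scope classical_set_scope.
Local Open Scope ring_scope.
Set Implicit Arguments.
Unset Strict Implicit.

(* Gamma_l cannot increase under an affine map f x = b + x A: if L is covered
   by the translates C i + g L, then f L is covered by f (C i) - g b + g (f L).
   A polytope is the convex hull of its vertices, so one with vertices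
   v_0, ..., v_m is the image of K_m^{1*} under x |-> v_0 + sum_i x_i (v_i - v_0).
   If K is symmetric about c, the reflection x |-> 2c - x permutes the vertices
   without fixed points (a fixed vertex is c, and an extreme centre forces
   K = {c}), so the 2m vertices are w_i and 2c - w_i, and K is the image of
   K_m^1 under x |-> c + sum_i x_i (w_i - c). *)

Section Convexity.
Variables (R : numFieldType) (V : lmodType R).

Definition is_convex (A : set V) : Prop :=
  forall a b t, A a -> A b -> 0 <= t <= 1 -> A ((1 - t) *: a + t *: b).

Lemma convex_mix (A : set V) a b t : is_convex A -> 0 <= t <= 1 ->
  (t < 1 -> A a) -> (0 < t -> A b) -> A ((1 - t) *: a + t *: b).
Proof.
move=> cA /andP[t0 t1] Aa Ab.
have [t_eq0|tn0] := eqVneq t 0.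
  by rewrite t_eq0 subr0 scale1r scale0r addr0; apply: Aa; rewrite t_eq0 ltr01.
have [t_eq1|tn1] := eqVneq t 1.
  by rewrite t_eq1 subrr scale0r add0r scale1r; apply: Ab; rewrite t_eq1 ltr01.
have t_gt0 : 0 < t by rewrite lt_def tn0.
have t_lt1 : t < 1 by rewrite lt_def eq_sym tn1.
by apply: cA; [exact: Aa t_lt1|exact: Ab t_gt0|rewrite t0 t1].
Qed.

Lemma convex_sum (A : set V) k (lam : 'I_k -> R) (q : 'I_k -> V) :
  is_convex A -> (forall i, 0 <= lam i) -> \sum_i lam i = 1 ->
  (forall i, 0 < lam i -> A (q i)) -> A (\sum_i lam i *: q i).
Proof.
move=> cA; elim: k lam q => [|k IH] lam q lam0 lam1 Aq.
  by move: lam1; rewrite big_ord0 => /eqP; rewrite eq_sym oner_eq0.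
move: lam1; rewrite !big_ord_recr /=; set t := lam ord_max => lam1.
have t1 : t <= 1 by rewrite -lam1 lerDr sumr_ge0.
have [tE|tn1] := eqVneq t 1.
  have sum0 : \sum_(i < k) lam (widen_ord (leqnSn k) i) = 0.
    by apply: (addIr t); rewrite lam1 tE add0r.
  have lamS0 i : lam (widen_ord (leqnSn k) i) = 0.
    exact: (psumr_eq0P (P := predT) (fun j _ => lam0 _) sum0).
  rewrite big1 ?add0r ?tE ?scale1r; last by move=> i _; rewrite lamS0 scale0r.
  by apply: Aq; rewrite -/t tE.
have t1' : 1 - t != 0 by rewrite subr_eq0 eq_sym.
have sumE : \sum_(i < k) lam (widen_ord (leqnSn k) i) = 1 - t by rewrite -lam1 addrK.
pose mu i := lam (widen_ord (leqnSn k) i) / (1 - t).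
have -> : \sum_(i < k) lam (widen_ord (leqnSn k) i) *: q (widen_ord (leqnSn k) i) =
    (1 - t) *: \sum_i mu i *: q (widen_ord (leqnSn k) i).
  rewrite scaler_sumr; apply: eq_bigr => i _.
  by rewrite scalerA /mu mulrCA divff // mulr1.
apply: convex_mix => //; first by rewrite lam0 t1.
  move=> _; apply: IH => [i||i mu_gt0].
  - by rewrite divr_ge0 // subr_ge0.
  - by rewrite -mulr_suml sumE divff.
  - by apply: Aq; move: mu_gt0; rewrite pmulr_lgt0 // invr_gt0 subr_gt0 lt_def eq_sym tn1.
exact: Aq.
Qed.

Lemma convex_subsum (A : set V) k (x : 'I_k -> R) a (q : 'I_k -> V) :
  is_convex A -> A a -> (forall i, A (q i)) ->
  (forall i, 0 <= x i) -> \sum_i x i <= 1 ->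
  A ((1 - \sum_i x i) *: a + \sum_i x i *: q i).
Proof.
move=> cA Aa Aq x0; set s := \sum_i x i => s1.
have [s0|sn0] := eqVneq s 0.
  rewrite s0 subr0 scale1r big1 ?addr0 // => i _.
  by rewrite (psumr_eq0P (P := predT) _ s0) ?scale0r.
have -> : \sum_i x i *: q i = s *: \sum_i (x i / s) *: q i.
  by rewrite scaler_sumr; apply: eq_bigr => i _; rewrite scalerA mulrCA divff ?mulr1.
apply: convex_mix; rewrite ?s1 ?sumr_ge0 // => _.
apply: convex_sum => // [i|]; first by rewrite divr_ge0 ?sumr_ge0.
by rewrite -mulr_suml divff.
Qed.

End Convexity.

Section ConvexHull.
Variables (R : realType) (d : nat).
Implicit Types (P Q : seq 'rV[R]_d) (C : set 'rV[R]_d).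

Lemma hull_convex P : is_convex (hull P).
Proof.
move=> _ _ t [al [al0 [al1 ->]]] [be [be0 [be1 ->]]] /andP[t0 t1].
exists (fun i => (1 - t) * al i + t * be i); split; [|split].
- by move=> i; rewrite addr_ge0 // mulr_ge0 // subr_ge0.
- by rewrite big_split /= -!mulr_sumr al1 be1 !mulr1 subrK.
- rewrite !scaler_sumr -big_split /=; apply: eq_bigr => i _.
  by rewrite [RHS]scalerDl !scalerA.
Qed.

Lemma hull_nil : hull [::] = set0 :> set 'rV[R]_d.
Proof.
by apply/seteqP; split=> // x [lam [_ [+ _]]]; rewrite big_ord0 => /eqP; rewrite eq_sym oner_eq0.
Qed.

Lemma mem_hull P x : x \in P -> hull P x.
Proof.
rewrite -index_mem => xP; pose i0 := Ordinal xP.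
exists (fun i => (i == i0)%:R); split; [|split].
- by move=> i; rewrite ler0n.
- by rewrite (bigD1 i0) //= eqxx big1 ?addr0 // => i /negbTE ->.
- rewrite (bigD1 i0) //= eqxx scale1r nth_index -?index_mem // big1 ?addr0 //.
  by move=> i /negbTE ->; rewrite scale0r.
Qed.

Lemma hull_sub_convex P C :
  is_convex C -> (forall x, x \in P -> C x) -> hull P `<=` C.
Proof.
move=> cC PC _ [lam [lam0 [lam1 ->]]]; apply: convex_sum => // i _.
by apply: PC; rewrite mem_nth.
Qed.

Lemma subset_hull P Q : {subset P <= Q} -> hull P `<=` hull Q.
Proof. by move=> PQ; apply: hull_sub_convex => [|x /PQ /mem_hull]; first exact: hull_convex. Qed.

Lemma eq_hull P Q : P =i Q -> hull P = hull Q.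
Proof. by move=> PQ; apply/seteqP; split; apply: subset_hull => x; rewrite PQ. Qed.

End ConvexHull.

Section ExtremePoints.
Variables (R : realType) (d : nat) (P : seq 'rV[R]_d) (p : 'rV[R]_d).
Implicit Type mu : 'I_(size P) -> R.

Let others := [seq x <- P | x != p].
Let off mu := \sum_(i : 'I_(size P) | P`_i != p) mu i.

Lemma convex_sum_split mu : \sum_i mu i = 1 ->
  \sum_i mu i *: P`_i = (1 - off mu) *: p + \sum_(i : 'I_(size P) | P`_i != p) mu i *: P`_i.
Proof.
move=> mu1; rewrite (bigID (fun i : 'I_(size P) => P`_i != p)) addrC /=; congr (_ + _).
have -> : 1 - off mu = \sum_(i : 'I_(size P) | ~~ (P`_i != p)) mu i.
  by rewrite /off -mu1 (bigID (fun i : 'I_(size P) => P`_i != p)) /= addrAC subrr add0r.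
by rewrite scaler_suml; apply: eq_bigr => i /negPn /eqP ->.
Qed.

Lemma convex_sum_off0 mu : (forall i, 0 <= mu i) -> \sum_i mu i = 1 ->
  off mu = 0 -> \sum_i mu i *: P`_i = p.
Proof.
move=> mu0 mu1 off0; rewrite convex_sum_split // off0 subr0 scale1r big1 ?addr0 //.
by move=> i Pi; rewrite (psumr_eq0P (fun j _ => mu0 j) off0) ?scale0r.
Qed.

Lemma hull_others_of_convex_sum mu : (forall i, 0 <= mu i) -> \sum_i mu i = 1 ->
  0 < off mu -> \sum_i mu i *: P`_i = p -> hull others p.
Proof.
move=> mu0 mu1 off_gt0 pE.
have off_neq0 : off mu != 0 by rewrite gt_eqF.
have -> : p = \sum_(i < size P) (if P`_i != p then mu i / off mu else 0) *: P`_i.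
  have offE : \sum_(i : 'I_(size P) | P`_i != p) mu i *: P`_i = off mu *: p.
    by apply: (addrI ((1 - off mu) *: p)); rewrite -convex_sum_split // pE -scalerDl subrK scale1r.
  rewrite -[LHS]scale1r -(mulVf off_neq0) -scalerA -offE scaler_sumr big_mkcond.
  by apply: eq_bigr => i _; case: ifP => _; rewrite ?scale0r ?scalerA 1?mulrC.
apply: convex_sum; first exact: hull_convex.
- by move=> i; case: ifP => // _; rewrite divr_ge0 // ltW.
- by rewrite -big_mkcond -mulr_suml divff.
- move=> i; case: ifP => [Pi _|_]; last by rewrite ltxx.
  by apply: mem_hull; rewrite mem_filter Pi mem_nth.
Qed.

Lemma extreme_point_hull : p \in P -> ~ hull others p -> extreme_point (hull P) p.
Proof.
move=> pP p_others; split; first exact: mem_hull.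
move=> _ _ t [al [al0 [al1 ->]]] [be [be0 [be1 ->]]] /andP[t0 t1] pE.
pose mu i := (1 - t) * al i + t * be i.
have mu0 i : 0 <= mu i by rewrite addr_ge0 // mulr_ge0 // ?subr_ge0 ltW.
have mu1 : \sum_i mu i = 1.
  by rewrite big_split /= -!mulr_sumr al1 be1 !mulr1 subrK.
have muE : \sum_i mu i *: P`_i = p.
  rewrite pE !scaler_sumr -big_split /=; apply: eq_bigr => i _.
  by rewrite [LHS]scalerDl !scalerA.
have off_mu0 : off mu = 0.
  apply/eqP; rewrite eq_le /off sumr_ge0 // andbT leNgt; apply/negP => off_gt0.
  exact/p_others/(hull_others_of_convex_sum mu0).
move: off_mu0; rewrite /off big_split /= -!mulr_sumr => /eqP.
rewrite paddr_eq0 ?mulr_ge0 ?sumr_ge0 ?subr_ge0 ?ltW //.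
rewrite !mulf_eq0 subr_eq0 (gt_eqF t0) (gt_eqF t1) /= => /andP[/eqP al_off /eqP be_off].
by split; apply: convex_sum_off0.
Qed.

End ExtremePoints.

Lemma polytope_hull_extreme (R : realType) d (K : set 'rV[R]_d) : polytope K ->
  exists P, K = hull P /\ forall p, p \in P -> extreme_point K p.
Proof.
move=> [P ->]; elim: {P}(size P).+1 {-2}P (ltnSn (size P)) => // n IH P sizePn.
have [P_extreme|] := pselect (forall p, p \in P -> extreme_point (hull P) p).
  by exists P.
move=> /existsNP [p /not_implyP [pP /(contra_not (extreme_point_hull pP))]].
set Q := [seq x <- P | x != p] => /contrapT pQ.
have -> : hull P = hull Q.
  apply/seteqP; split; last by apply: subset_hull => x; rewrite mem_filter => /andP[].
  apply: hull_sub_convex => [|x xP]; first exact: hull_convex.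
  by have [-> //|xp] := eqVneq x p; apply: mem_hull; rewrite mem_filter xp.
apply: IH; rewrite -ltnS (leq_trans _ sizePn) // ltnS size_filter.
by rewrite -(count_predC (pred1 p)) -addn1 addnC leq_add2r -has_count has_pred1.
Qed.

Lemma polytope_hull_vertices (R : realType) d (K : set 'rV[R]_d) (s : seq 'rV[R]_d) :
  polytope K -> (forall x, extreme_point K x <-> x \in s) -> K = hull s.
Proof.
move=> /polytope_hull_extreme [P [KP P_extreme]] sE; apply/seteqP; split.
  by rewrite KP; apply: subset_hull => x /P_extreme /sE.
apply: hull_sub_convex => [|x /sE []//]; rewrite KP; exact: hull_convex.
Qed.

Section AffineImages.
Variables (R : realType) (m n : nat).

Definition affine (b : 'rV[R]_n) (A : 'M[R]_(m, n)) (x : 'rV[R]_m) := b + x *m A.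

Lemma affine_rows (b : 'rV[R]_n) (u : 'I_m -> 'rV[R]_n) x :
  affine b (\matrix_i u i) x = b + \sum_i x 0 i *: u i.
Proof. by rewrite /affine mulmx_sum_row; congr (_ + _); apply: eq_bigr => i _; rewrite rowK. Qed.

Lemma affine_image_convex b A (L : set 'rV[R]_m) :
  is_convex L -> is_convex (affine b A @` L).
Proof.
move=> cL _ _ t [x Lx <-] [y Ly <-] t01; exists ((1 - t) *: x + t *: y); first exact: cL.
rewrite /affine mulmxDl -!scalemxAl !scalerDr addrACA; congr (_ + _).
by rewrite -scalerDl subrK scale1r.
Qed.

Lemma le_Gamma l (K : set 'rV[R]_n) (L : set 'rV[R]_m) :
  (forall g (C : 'I_l -> 'rV_m), 0 < g -> L `<=` translates C g L ->
     exists C' : 'I_l -> 'rV_n, K `<=` translates C' g K) ->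
  (Gamma l K <= Gamma l L)%E.
Proof.
move=> cover; apply: le_ereal_inf => _ [g [g0 [C LC]] <-].
by exists g => //; split => //; exact: cover LC.
Qed.

Lemma Gamma_set0 l (L : set 'rV[R]_m) : (Gamma l (@set0 'rV[R]_n) <= Gamma l L)%E.
Proof. by apply: le_Gamma => g C _ _; exists (fun=> 0). Qed.

Lemma Gamma_affine_image l b A (L : set 'rV[R]_m) :
  (Gamma l (affine b A @` L) <= Gamma l L)%E.
Proof.
apply: le_Gamma => g C _ LC; exists (fun i => affine b A (C i) - g *: b).
move=> _ [x Lx <-]; have [i [y [Ly ->]]] := LC x Lx.
exists i, (affine b A y); split; first by exists y.
by rewrite /affine mulmxDl -scalemxAl scalerDr !addrA subrK.
Qed.

End AffineImages.

Lemma rebase_sum (R : numFieldType) (V : lmodType R) k (x : 'I_k -> R) c (u : 'I_k -> V) :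
  c + \sum_i x i *: (u i - c) = (1 - \sum_i x i) *: c + \sum_i x i *: u i.
Proof.
under eq_bigr do rewrite scalerBr.
by rewrite big_split sumrN -scaler_suml scalerBl scale1r /= addrA addrAC.
Qed.

Lemma midpoint_reflect (R : numFieldType) (V : lmodType R) (c y : V) :
  (1 - 2^-1) *: y + 2^-1 *: (2 *: c - y) = c.
Proof.
have half : 1 - 2^-1 = 2^-1 :> R by rewrite {1}(splitr 1) mul1r addrK.
by rewrite half -scalerDr addrC subrK scalerA mulVf ?scale1r ?pnatr_eq0.
Qed.

Lemma reflect_involutive (R : numFieldType) (V : lmodType R) (c : V) :
  involutive (fun x => 2 *: c - x).
Proof. by move=> x; rewrite opprB addrC subrK. Qed.

Section SimplexAndCrossPolytope.
Variables (R : realType) (n : nat).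

Lemma K1star_convex k : is_convex (@K1star R k).
Proof.
move=> a b t [a1 a0] [b1 b0] /andP[t0 t1]; split => [|i]; last first.
  by rewrite !mxE addr_ge0 // mulr_ge0 // subr_ge0.
under eq_bigr do rewrite !mxE.
rewrite big_split /= -!mulr_sumr.
have t1' : 0 <= 1 - t by rewrite subr_ge0.
have := ler_wpM2l t1' a1; have := ler_wpM2l t0 b1.
by rewrite !mulr1; lra.
Qed.

Lemma K1_convex k : is_convex (@K1 R k).
Proof.
move=> a b t a1 b1 /andP[t0 t1]; rewrite /K1 /=.
apply: le_trans (_ : \sum_i ((1 - t) * `|a 0 i| + t * `|b 0 i|) <= 1).
  apply: ler_sum => i _; rewrite !mxE; apply: le_trans (ler_normD _ _) _.
  by rewrite !normrM (ger0_norm t0) ger0_norm ?subr_ge0.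
rewrite big_split /= -!mulr_sumr.
have t1' : 0 <= 1 - t by rewrite subr_ge0.
have := ler_wpM2l t1' a1; have := ler_wpM2l t0 b1.
by rewrite !mulr1; lra.
Qed.

Lemma affine_rows_delta k b (u : 'I_k -> 'rV[R]_n) i (s : R) :
  affine b (\matrix_i u i) (s *: delta_mx 0 i) = b + s *: u i.
Proof. by rewrite /affine -scalemxAl -rowE rowK. Qed.

Lemma sum_scaled_delta k (i : 'I_k) (s : R) (F : R -> R) : F 0 = 0 ->
  \sum_j F ((s *: delta_mx 0 i : 'rV[R]_k) 0 j) = F s.
Proof.
move=> F0; rewrite (bigD1 i) //= !mxE !eqxx mulr1 big1 ?addr0 // => j /negbTE ji.
by rewrite !mxE ji mulr0.
Qed.

Lemma hull_cons_affine_simplex (v0 : 'rV[R]_n) vs k : size vs = k ->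
  hull (v0 :: vs) = affine v0 (\matrix_(i < k) (vs`_i - v0)) @` @K1star R k.
Proof.
move=> size_vs; apply/seteqP; split.
  apply: hull_sub_convex => [|x]; first exact/affine_image_convex/K1star_convex.
  rewrite inE => /orP[/eqP ->|].
    exists 0; last by rewrite /affine mul0mx addr0.
    by split=> [|i]; rewrite ?big1 ?ler01 // => *; rewrite mxE.
  move=> /(nthP 0) [i]; rewrite size_vs => ik <-.
  exists (1 *: delta_mx 0 (Ordinal ik)); last first.
    by rewrite affine_rows_delta scale1r addrC subrK.
  split=> [|j]; last by rewrite !mxE mul1r ler0n.
  by rewrite (sum_scaled_delta _ _ (F := id)).
move=> _ [x [x1 x0] <-]; rewrite affine_rows rebase_sum.
apply: convex_subsum => // [||i]; first exact: hull_convex.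
  by apply: mem_hull; exact: mem_head.
by apply: mem_hull; rewrite inE mem_nth ?orbT ?size_vs.
Qed.

Lemma hull_pairs_affine_cross (c : 'rV[R]_n) w k : size w = k.+1 ->
  hull (w ++ map (fun x => 2 *: c - x) w) =
  affine c (\matrix_(i < k.+1) (w`_i - c)) @` @K1 R k.+1.
Proof.
move=> size_w; set r := fun x => 2 *: c - x.
have hull_w (i : 'I_k.+1) : hull (w ++ map r w) w`_i.
  by apply: mem_hull; rewrite mem_cat mem_nth // size_w.
have hull_rw (i : 'I_k.+1) : hull (w ++ map r w) (r w`_i).
  by apply: mem_hull; rewrite mem_cat map_f ?orbT // mem_nth // size_w.
apply/seteqP; split.
  have image_e (i : 'I_k.+1) (s : R) : `|s| = 1 ->
      (affine c (\matrix_(i < k.+1) (w`_i - c)) @` @K1 R k.+1) (c + s *: (w`_i - c)).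
    move=> s1; exists (s *: delta_mx 0 i); last exact: affine_rows_delta.
    by rewrite /K1 /= sum_scaled_delta ?normr0 ?s1.
  apply: hull_sub_convex => [|x]; first exact/affine_image_convex/K1_convex.
  rewrite mem_cat => /orP[|/mapP[y]] /(nthP 0) [i]; rewrite size_w => ik <-.
    by have := image_e (Ordinal ik) 1; rewrite normr1 scale1r addrC subrK; apply.
  move=> ->; have := image_e (Ordinal ik) (-1); rewrite normrN normr1 scaleN1r opprB.
  by rewrite addrA -mulr2n -scaler_nat; apply.
move=> _ [x x1 <-].
pose q i := if 0 <= x 0 i then w`_i else r w`_i.
have -> : affine c (\matrix_(i < k.+1) (w`_i - c)) x =
    c + \sum_i `|x 0 i| *: (q i - c).
  rewrite affine_rows; congr (_ + _); apply: eq_bigr => i _; rewrite /q /r.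
  case: ifP => [x_ge0|/negbT]; first by rewrite ger0_norm.
  rewrite -ltNge => /ltr0_norm ->; rewrite scaleNr -scalerN opprB.
  by rewrite scaler_nat mulr2n -addrA opprD addrA subrr add0r opprB.
rewrite rebase_sum; apply: convex_subsum => //; first exact: hull_convex.
- rewrite -(midpoint_reflect c w`_0).
  apply: hull_convex; [exact: (hull_w ord0)|exact: (hull_rw ord0)|].
  by rewrite invr_ge0 ler0n invf_le1 ?ler1n ?ltr0n.
- by move=> i; rewrite /q; case: ifP.
Qed.

End SimplexAndCrossPolytope.

Lemma involution_pairs (T : eqType) (r : T -> T) (s : seq T) : involutive r ->
  uniq s -> (forall x, x \in s -> r x \in s) -> (forall x, x \in s -> r x != x) ->
  exists w, perm_eq s (w ++ map r w).
Proof.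
move=> rK; elim: {s}(size s).+1 {-2}s (ltnSn (size s)) => // n IH [|x t] size_xt.
  by exists [::].
move=> /= /andP[xt uniq_t] r_closed r_nfix.
have rxt : r x \in t.
  have := r_closed x (mem_head _ _); rewrite inE => /orP[/eqP rxx|//].
  by move: (r_nfix x (mem_head _ _)); rewrite rxx eqxx.
have [w pw] : exists w, perm_eq (rem (r x) t) (w ++ map r w).
  apply: IH => [|||y].
  - by rewrite size_rem //; exact: leq_ltn_trans (leq_pred (size t)) size_xt.
  - exact: rem_uniq.
  - move=> y; rewrite !mem_rem_uniq // !inE => /andP[ryx yt].
    have : r y \in x :: t by apply: r_closed; rewrite inE yt orbT.
    rewrite inE => /orP[/eqP ryx'|->]; first by move: ryx; rewrite -ryx' rK eqxx.
    by rewrite andbT; apply: contraNneq xt => /(congr1 r); rewrite !rK => <-.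
  - by rewrite mem_rem_uniq // => /andP[_ yt]; apply: r_nfix; rewrite inE yt orbT.
exists (x :: w); rewrite /= perm_cons; apply: perm_trans (perm_to_rem rxt) _.
by rewrite perm_sym -cat1s perm_catCA /= perm_cons perm_sym.
Qed.

Section CentralSymmetry.
Variables (R : realType) (n : nat) (K : set 'rV[R]_n) (c : 'rV[R]_n).
Hypothesis symK : forall x, K x <-> K (2 *: c - x).

Lemma extreme_point_reflect x : extreme_point K x -> extreme_point K (2 *: c - x).
Proof.
move=> [Kx x_extreme]; split; first exact: (symK x).1.
move=> y z t Ky Kz t01 xE.
have xE' : x = (1 - t) *: (2 *: c - y) + t *: (2 *: c - z).
  by rewrite -[x](reflect_involutive c) xE !scalerBr addrACA -scalerDl subrK scale1r opprD.
have [yE zE] := x_extreme _ _ t ((symK y).1 Ky) ((symK z).1 Kz) t01 xE'.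
by split; [rewrite -yE|rewrite -zE]; rewrite reflect_involutive.
Qed.

Lemma reflect_extreme_neq x y z : K y -> K z -> y != z ->
  extreme_point K x -> 2 *: c - x != x.
Proof.
move=> Ky Kz yz [Kx x_extreme]; apply: contra_neq yz => rx.
have xc : x = c by rewrite -[RHS](midpoint_reflect c x) rx -scalerDl subrK scale1r.
have half01 : 0 < (2^-1 : R) < 1 by rewrite invr_gt0 ltr0n invf_lt1 ?ltr0n ?ltr1n.
have onlyc u : K u -> u = c.
  move=> Ku; have xE : x = (1 - 2^-1) *: u + 2^-1 *: (2 *: c - u).
    by rewrite midpoint_reflect.
  by rewrite -xc; have [] := x_extreme _ _ _ Ku ((symK u).1 Ku) half01 xE.
by rewrite (onlyc y Ky) (onlyc z Kz).
Qed.

End CentralSymmetry.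

Lemma Gamma_polytope_le_simplex (R : realType) n m (K : set 'rV[R]_n) l :
  polytope K -> num_vertices K m.+1 -> (Gamma l K <= Gamma l (@K1star R m))%E.
Proof.
move=> pK [[|v0 vs] [_ [// [size_vs] sE]]].
rewrite (polytope_hull_vertices pK sE) (hull_cons_affine_simplex v0 size_vs).
exact: Gamma_affine_image.
Qed.

Lemma Gamma_symmetric_polytope_le_cross (R : realType) n m (K : set 'rV[R]_n) l :
  polytope K -> centrally_symmetric K -> num_vertices K (2 * m)%N ->
  (Gamma l K <= Gamma l (@K1 R m))%E.
Proof.
move=> pK [c symK] [s [uniq_s [size_s sE]]].
rewrite (polytope_hull_vertices pK sE).
case: m size_s => [/size0nil ->|k size_s]; first by rewrite hull_nil; exact: Gamma_set0.
have Ks x : x \in s -> K x by move=> /sE [].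
have [y [z [Ky [Kz yz]]]] : exists y z, K y /\ K z /\ y != z.
  case: s uniq_s size_s Ks {sE} => [|y [|z t]] //=; first by move=> _ /eqP; rewrite mulnS.
  rewrite inE negb_or => /andP[/andP[yz _] _] _ Ks.
  by exists y, z; do !split => //; apply: Ks; rewrite !inE eqxx ?orbT.
have [w sw] : exists w, perm_eq s (w ++ map (fun x => 2 *: c - x) w).
  apply: involution_pairs => //; first exact: reflect_involutive.
  - by move=> x /sE/(extreme_point_reflect symK)/sE.
  - by move=> x /sE; exact: reflect_extreme_neq Ky Kz yz.
have size_w : size w = k.+1.
  move/perm_size: sw; rewrite size_s size_cat size_map addnn -mul2n => /eqP.
  by rewrite eqn_mul2l => /eqP.
rewrite (eq_hull (perm_mem sw)) (hull_pairs_affine_cross c size_w).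
exact: Gamma_affine_image.
Qed.

Theorem theorem4p2 (R : realType) (n m : nat) (K : set 'rV[R]_n) :
  polytope K ->
  (num_vertices K m.+1 ->
     forall l : nat, (0 < l)%N -> (Gamma l K <= Gamma l (@K1star R m))%E) /\
  (centrally_symmetric K -> num_vertices K (2 * m)%N ->
     forall l : nat, (0 < l)%N -> (Gamma l K <= Gamma l (@K1 R m))%E).
Proof.
move=> pK; split=> [vK l _|sK vK l _]; first exact: Gamma_polytope_le_simplex.
exact: Gamma_symmetric_polytope_le_cross.
Qed.
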